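(* For every integer $n\geq -1$, the polynomial $e_1^{n}\,\tilde e_1^{\,n-1}\in\mathbb{Z}\langle X\rangle$ is a polynomial with Jordan property.
   Context: Rings are associative with $1$; homomorphisms preserve $1$. A Jordan homomorphism $\alpha:R\to R'$ is a map with $(a+b)^\alpha=a^\alpha+b^\alpha$, $1^\alpha=1'$, $(aba)^\alpha=a^\alpha b^\alpha a^\alpha$ for all $a,b\in R$. Let $\mathbb{Z}\langle X\rangle$ be the free $\mathbb{Z}$-algebra on non-commuting indeterminates $x_1,x_2,\ldots$. For a finite or infinite sequence $T=(t_1,t_2,\ldots)$ in a ring $R$, $f(T)$ denotes the image of $f\in\mathbb{Z}\langle X\rangle$ under the homomorphism $x_i\mapsto t_i$ (finite sequences are padded with zeros, i.e. $x_i\mapsto 0$ for $i$ beyond the length). A polynomial $f\in\mathbb{Z}\langle X\rangle$ has the Jordan property if $f(T)^\alpha=f(T^\alpha)$ for every Jordan homomorphism $\alpha:R\to R'$ between arbitrary rings and every finite or infinite sequence $T$ in $R$, where $T^\alpha=(t_1^\alpha,t_2^\alpha,\ldots)$. Define $e^{(-2)}:=-1$, $e^{(-1)}:=0$, $e^{(0)}:=1$, $e^{(n)}:=e^{(n-1)}x_n-e^{(n-2)}$ for $n\geq1$. Put $e_1^{m}:=e^{(m)}$ for $m\geq -2$, and $\tilde e_1^{\,m}:=e^{(m)}(x_m,x_{m-1},\ldots,x_1)$ (the polynomial obtained from $e^{(m)}$ by substituting $x_i\mapsto x_{m+1-i}$ for $i\leq m$) for $m\geq 1$, $\tilde e_1^{\,m}:=e^{(m)}$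 for $-2\leq m\leq 0$. *)

From mathcomp Require Import all_boot all_algebra.
Set Implicit Arguments. Unset Strict Implicit. Unset Printing Implicit Defensive.
Import GRing.Theory.
Local Open Scope ring_scope.

(* Elements of the free Z-algebra Z<x_1, x_2, ...> on non-commuting
   indeterminates, presented by ring expressions.  Variable x_i is [NVar i]
   (index 0 is unused; indices start at 1 as in the paper). A polynomial is
   only ever used through its evaluation [neval], which is the unique ring
   homomorphism Z<X> -> R sending x_i to t_i, so this is faithful. *)
Inductive ncpoly : Type :=
| NVar : nat -> ncpoly
| NConst : int -> ncpoly
| NAdd : ncpoly -> ncpoly -> ncpoly
| NOpp : ncpoly -> ncpoly
| NMul : ncpoly -> ncpoly -> ncpoly.

(* f(T) for a sequence T = (t_1, t_2, ...) in R, given as T : nat -> R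
   (t_i = T i; T 0 is ignored).  Finite sequences are padded with zeros. *)
Fixpoint neval (R : pzRingType) (T : nat -> R) (f : ncpoly) : R :=
  match f with
  | NVar i => T i
  | NConst z => z%:~R
  | NAdd p q => neval T p + neval T q
  | NOpp p => - neval T p
  | NMul p q => neval T p * neval T q
  end.

Fixpoint nsubst (s : nat -> ncpoly) (f : ncpoly) : ncpoly :=
  match f with
  | NVar i => s i
  | NConst z => NConst z
  | NAdd p q => NAdd (nsubst s p) (nsubst s q)
  | NOpp p => NOpp (nsubst s p)
  | NMul p q => NMul (nsubst s p) (nsubst s q)
  end.

Definition jordan_hom (R R' : pzRingType) (alpha : R -> R') : Prop :=
  [/\ forall a b, alpha (a + b) = alpha a + alpha b,
      alpha 1 = 1 &
      forall a b, alpha (a * b * a) = alpha a * alpha b * alpha a].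

Definition jordan_property (f : ncpoly) : Prop :=
  forall (R R' : pzRingType) (alpha : R -> R') (T : nat -> R),
    jordan_hom alpha -> alpha (neval T f) = neval (fun i => alpha (T i)) f.

(* e^(k) for k >= 0:  e^(0) = 1, e^(1) = e^(0) x_1 - e^(-1) = x_1,
   e^(k+2) = e^(k+1) x_(k+2) - e^(k). *)
Fixpoint epos (k : nat) : ncpoly * ncpoly :=
  (* returns (e^(k), e^(k-1)), with e^(-1) = 0 *)
  match k with
  | 0 => (NConst 1, NConst 0)
  | k'.+1 => let (a, b) := epos k' in
             (NAdd (NMul a (NVar k'.+1)) (NOpp b), a)
  end.

(* e^(m) for m : int, m >= -2 (e^(-1) = 0, e^(-2) = -1; other negative
   values are irrelevant and set to 0). *)
Definition epoly (m : int) : ncpoly :=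
  match m with
  | Posz k => (epos k).1
  | Negz 0 => NConst 0
  | Negz 1 => NConst (-1)
  | Negz _ => NConst 0
  end.

Definition e1 (m : int) : ncpoly := epoly m.

(* tilde e_1^m := e^(m)(x_m, ..., x_1) for m >= 1, i.e. x_i |-> x_(m+1-i)
   for i <= m;  := e^(m) for -2 <= m <= 0. *)
Definition te1 (m : int) : ncpoly :=
  match m with
  | Posz k.+1 =>
      nsubst (fun i => if (1 <= i <= k.+1)%N then NVar (k.+2 - i) else NVar i)
             (epoly m)
  | _ => epoly m
  end.

From mathcomp Require Import all_boot all_algebra.
From mathcomp Require Import zify.
Set Implicit Arguments. Unset Strict Implicit. Unset Printing Implicit Defensive.
Import GRing.Theory.
Local Open Scope ring_scope.

(* The polynomial is K_n(x) K'_(n-1)(x), where K_k is the continuant built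
   by multiplying on the right (K_k = e^(k)) and K'_k the one built by
   multiplying on the left, which equals e^(k)(x_k, ..., x_1).  Setting
   Z_k(s) = K_k s K'_k, the three-term recurrences express Z_(k+2)(s), the
   mixed term V_(k+1)(y, z), where V_k(y, z) = K_(k+1) y z K'_k + K_k z y K'_(k+1),
   and the products K_(k+1) K'_k, K_k K'_(k+1) through Z_(k+1) applied to the
   Jordan expressions a s a and a y z + z y a, plus lower-index terms of the
   same kinds.  A simultaneous induction therefore shows that all of them
   commute with every Jordan homomorphism. *)

Fixpoint continuant (R : pzRingType) (U : nat -> R) (k : nat) : R :=
  match k with
  | 0 => 1
  | 1 => U 1%N
  | (k'.+1 as k1).+1 => continuant U k1 * U k1.+1 - continuant U k'
  end.

(* The continuant of the converse ring: its recursion multiplies on the left. *)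
Definition rcontinuant (R : pzRingType) (U : nat -> R) (k : nat) : R :=
  @continuant R^c U k.

Section Continuants.
Variable R : pzRingType.
Implicit Types (U : nat -> R) (k : nat).

Definition shift U : nat -> R := fun i => U i.+1.
Definition mirror k U : nat -> R := fun i => U (k.+1 - i)%N.

Lemma continuantSS U k :
  continuant U k.+2 = continuant U k.+1 * U k.+2 - continuant U k.
Proof. by []. Qed.

Lemma rcontinuantSS U k :
  rcontinuant U k.+2 = U k.+2 * rcontinuant U k.+1 - rcontinuant U k.
Proof. by []. Qed.

Lemma eq_continuant U V k :
  (forall i, (0 < i <= k)%N -> U i = V i) -> continuant U k = continuant V k.
Proof.
elim/ltn_ind: k => -[|[|k]] IH eqUV; [by [] | exact: eqUV |].
have eqUV_le m : (m <= k.+2)%N -> forall i, (0 < i <= m)%N -> U i = V i.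
  by move=> le_m i /andP[i_gt0 le_im]; apply: eqUV; lia.
rewrite !continuantSS (IH k.+1) ?(IH k) ?eqUV //; try apply: eqUV_le; lia.
Qed.

Lemma continuantSSl U k :
  continuant U k.+2 = U 1%N * continuant (shift U) k.+1 - continuant (shift (shift U)) k.
Proof.
suff: continuant U k.+2 = U 1%N * continuant (shift U) k.+1 - continuant (shift (shift U)) k
   /\ continuant U k.+3 = U 1%N * continuant (shift U) k.+2 - continuant (shift (shift U)) k.+1
  by case.
elim: k => [|k [IHk IHk1]].
  split; first by rewrite continuantSS /=.
  by rewrite !continuantSS /= /shift !(mulrBl, mulrBr) mul1r mulr1 mulrA addrAC.
split=> //.
rewrite continuantSS IHk1 IHk (continuantSS (shift U) k.+1).
rewrite (continuantSS (shift (shift U)) k) !(mulrBl, mulrBr) !mulrA !opprB !addrA.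
by rewrite [LHS](ACl (1*4*3*2)).
Qed.

Lemma continuant_mirror U k : continuant (mirror k U) k = rcontinuant U k.
Proof.
elim/ltn_ind: k => -[|[|k]] IH //.
by rewrite continuantSSl rcontinuantSS -IH // -IH.
Qed.

Definition sandwich U k (s : R) : R := continuant U k * s * rcontinuant U k.

Definition cross_sandwich U k (y z : R) : R :=
  continuant U k.+1 * y * z * rcontinuant U k + continuant U k * z * y * rcontinuant U k.+1.

Definition prod_succ_l U k : R := continuant U k.+1 * rcontinuant U k.
Definition prod_succ_r U k : R := continuant U k * rcontinuant U k.+1.

Lemma sandwich0 U s : sandwich U 0 s = s.
Proof. by rewrite /sandwich mulr1 mul1r. Qed.

Lemma sandwich1 U s : sandwich U 1 s = U 1%N * s * U 1%N.
Proof. by []. Qed.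

Lemma cross_sandwich0 U y z : cross_sandwich U 0 y z = U 1%N * y * z + z * y * U 1%N.
Proof. by rewrite /cross_sandwich !mulr1 !mul1r. Qed.

Lemma prod_succ_l0 U : prod_succ_l U 0 = U 1%N.
Proof. exact: mulr1. Qed.

Lemma prod_succ_r0 U : prod_succ_r U 0 = U 1%N.
Proof. exact: mul1r. Qed.

Lemma sandwichSS U k s :
  sandwich U k.+2 s =
  sandwich U k.+1 (U k.+2 * s * U k.+2) - cross_sandwich U k (U k.+2) s + sandwich U k s.
Proof.
rewrite /sandwich /cross_sandwich continuantSS rcontinuantSS.
rewrite !(mulrBl, mulrBr) !mulrA !opprB opprD !addrA.
by rewrite [LHS](ACl (1*4*2*3)).
Qed.

Lemma cross_sandwichSS U k y z :
  cross_sandwich U k.+1 y z =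
  sandwich U k.+1 (U k.+2 * y * z + z * y * U k.+2) - cross_sandwich U k z y.
Proof.
rewrite /sandwich /cross_sandwich continuantSS rcontinuantSS.
rewrite !(mulrBl, mulrBr, mulrDl, mulrDr) !mulrA opprD !addrA.
by rewrite [LHS](ACl (1*3*4*2)).
Qed.

Lemma prod_succ_lSS U k :
  prod_succ_l U k.+1 = sandwich U k.+1 (U k.+2) - prod_succ_r U k.
Proof. by rewrite /prod_succ_l /sandwich continuantSS mulrBl. Qed.

Lemma prod_succ_rSS U k :
  prod_succ_r U k.+1 = sandwich U k.+1 (U k.+2) - prod_succ_l U k.
Proof. by rewrite /prod_succ_r /sandwich rcontinuantSS mulrBr !mulrA. Qed.

End Continuants.

Lemma mulrDD_sandwich (R : pzRingType) (a b c : R) :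
  (a + c) * b * (a + c) = a * b * a + (a * b * c + c * b * a) + c * b * c.
Proof. by rewrite !(mulrDl, mulrDr) !addrA [LHS](ACl (1*3*2*4)). Qed.

Section JordanHom.
Variables (R R' : pzRingType) (alpha : R -> R').
Hypothesis alphaJ : jordan_hom alpha.

Lemma jordan_homD a b : alpha (a + b) = alpha a + alpha b.
Proof. by case: alphaJ. Qed.

Lemma jordan_homU a b : alpha (a * b * a) = alpha a * alpha b * alpha a.
Proof. by case: alphaJ. Qed.

Lemma jordan_hom0 : alpha 0 = 0.
Proof. by apply: (@addrI _ (alpha 0)); rewrite -jordan_homD !addr0. Qed.

Lemma jordan_homN a : alpha (- a) = - alpha a.
Proof. by apply: (@addrI _ (alpha a)); rewrite -jordan_homD !subrr jordan_hom0. Qed.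

Lemma jordan_homB a b : alpha (a - b) = alpha a - alpha b.
Proof. by rewrite jordan_homD jordan_homN. Qed.

Lemma jordan_hom_sym a b c :
  alpha (a * b * c + c * b * a) = alpha a * alpha b * alpha c + alpha c * alpha b * alpha a.
Proof.
have := congr1 alpha (mulrDD_sandwich a b c).
rewrite jordan_homU jordan_homD mulrDD_sandwich !jordan_homD !jordan_homU.
by move/addIr/addrI<-.
Qed.

Variable T : nat -> R.
Let T' : nat -> R' := fun i => alpha (T i).

Lemma jordan_hom_sandwiches k :
  [/\ forall s, alpha (sandwich T k s) = sandwich T' k (alpha s),
      forall s, alpha (sandwich T k.+1 s) = sandwich T' k.+1 (alpha s) &
      forall y z, alpha (cross_sandwich T k y z) = cross_sandwich T' k (alpha y) (alpha z)].
Proof.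
elim: k => [|k [IH0 IH1 IHc]].
  by split=> [s|s|y z]; rewrite ?sandwich0 ?sandwich1 ?cross_sandwich0 ?jordan_homU ?jordan_hom_sym.
split=> // [s|y z].
  by rewrite !sandwichSS jordan_homD jordan_homB IH1 jordan_homU IHc IH0.
by rewrite !cross_sandwichSS jordan_homB IH1 jordan_hom_sym IHc.
Qed.

Lemma jordan_hom_prod_succ k :
  alpha (prod_succ_l T k) = prod_succ_l T' k /\ alpha (prod_succ_r T k) = prod_succ_r T' k.
Proof.
elim: k => [|k [IHl IHr]]; first by rewrite !prod_succ_l0 !prod_succ_r0.
have [_ alpha_sandwich _] := jordan_hom_sandwiches k.
by rewrite !prod_succ_lSS !prod_succ_rSS !jordan_homB alpha_sandwich IHl IHr.
Qed.

End JordanHom.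

Lemma neval_nsubst (R : pzRingType) (T : nat -> R) (s : nat -> ncpoly) (f : ncpoly) :
  neval T (nsubst s f) = neval (fun i => neval T (s i)) f.
Proof. by elim: f => //= [p -> q ->|p ->|p -> q ->]. Qed.

Lemma epos_fst k : (epos k.+1).1 = NAdd (NMul (epos k).1 (NVar k.+1)) (NOpp (epos k).2).
Proof. by rewrite /=; case: (epos k). Qed.

Lemma epos_snd k : (epos k.+1).2 = (epos k).1.
Proof. by rewrite /=; case: (epos k). Qed.

Lemma neval_e1 (R : pzRingType) (U : nat -> R) k : neval U (e1 (Posz k)) = continuant U k.
Proof.
suff: neval U (epos k).1 = continuant U k /\ neval U (epos k.+1).1 = continuant U k.+1 by case.
elim: k => [|k [IHk IHk1]].
  by split; rewrite ?epos_fst /= ?mul1r ?subr0.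
by split=> //; rewrite epos_fst epos_snd /= IHk1 IHk.
Qed.

Lemma neval_te1 (R : pzRingType) (T : nat -> R) k : neval T (te1 (Posz k)) = rcontinuant T k.
Proof.
case: k => [//|k].
rewrite /te1 neval_nsubst neval_e1 -continuant_mirror.
by apply: eq_continuant => i /andP[-> ->].
Qed.

Theorem proposition3p3 (n : int) :
  -1 <= n -> jordan_property (NMul (e1 n) (te1 (n - 1))).
Proof.
move=> n_ge_m1 R R' alpha T alphaJ.
case: n n_ge_m1 => [[|k]|[|k]] // _.
- by rewrite /= !mulr0 jordan_hom0.
- have -> : Posz k.+1 - 1 = Posz k by rewrite -addn1 PoszD addrK.
  have [alpha_prod _] := jordan_hom_prod_succ alphaJ T k.
  by rewrite /prod_succ_l -!neval_e1 -!neval_te1 in alpha_prod.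
- by rewrite /= !mul0r jordan_hom0.
Qed.
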